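(* Let $n$ be a positive integer. There exists a natural number $f(n)$, depending only on $n$, such that every finite group $G$ with exactly $n$ irrational conjugacy classes has at most $f(n)$ irrational irreducible characters. In particular, there exists a natural number $k = f(n)$ such that $[\mathbb{Q}(\chi):\mathbb{Q}] \le k$ for all $\chi \in \mathrm{Irr}(G)$ and all such groups $G$.
   Context: For a finite group $G$, $\mathrm{Irr}(G)$ is the set of complex irreducible characters. A conjugacy class $K$ is irrational if $\chi(K) \notin \mathbb{Q}$ for some $\chi \in \mathrm{Irr}(G)$. For $\chi \in \mathrm{Irr}(G)$, $\mathbb{Q}(\chi)$ is the field generated over $\mathbb{Q}$ by the values of $\chi$; $\chi$ is irrational if $\mathbb{Q}(\chi) \neq \mathbb{Q}$. *)

From HB Require Import structures.
From mathcomp Require Import all_boot all_order all_algebra all_fingroup all_solvable all_field all_character.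
Set Implicit Arguments. Unset Strict Implicit. Unset Printing Implicit Defensive.
Import GRing.Theory Num.Theory.
Local Open Scope ring_scope.

Definition irrational_class (gT : finGroupType) (G : {group gT}) (K : {set gT}) : bool :=
  [exists i : Iirr G, 'chi[G]_i (repr K) \notin Crat].

Definition num_irrational_classes (gT : finGroupType) (G : {group gT}) : nat :=
  #|[set K in classes G | irrational_class G K]|.

(* Q(chi): the subfield of algC generated by the values of chi, i.e. the
   intersection of all subfields (divring-closed subsets) of algC that
   contain every value chi g. *)
Definition in_Qfield (gT : finGroupType) (G : {group gT}) (chi : 'CF(G)) (x : algC) : Prop :=
  forall S : {pred algC}, GRing.divring_closed S ->
    (forall g : gT, chi g \in S) -> x \in S.

(* chi is irrational iff Q(chi) <> Q, i.e. some value of chi is not rational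
   (Q(chi) = Q exactly when all generators chi g lie in Q). *)
Definition irrational_char (gT : finGroupType) (G : {group gT}) (chi : 'CF(G)) : bool :=
  [exists g in G, chi g \notin Crat].

Definition num_irrational_chars (gT : finGroupType) (G : {group gT}) : nat :=
  #|[set i : Iirr G | irrational_char 'chi[G]_i]|.

(* [Q(chi) : Q] <= k : Q(chi) has dimension at most k as a Q-vector space,
   i.e. any k+1 elements of Q(chi) are Q-linearly dependent. *)
Definition Qdegree_le (gT : finGroupType) (G : {group gT}) (chi : 'CF(G)) (k : nat) : Prop :=
  forall s : seq algC, size s = k.+1 -> (forall x, x \in s -> in_Qfield chi x) ->
    exists a : seq rat, [/\ size a = k.+1, has (fun q => q != 0) a &
      \sum_(i < k.+1) ratr a`_i * s`_i = 0].

From HB Require Import structures.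
From mathcomp Require Import all_boot all_order all_algebra all_fingroup all_solvable all_field all_character.
From Stdlib Require Import Classical.
Import GRing.Theory Num.Theory.
Local Open Scope ring_scope.

Set Implicit Arguments.
Unset Strict Implicit.
Unset Printing Implicit Defensive.

(* Every Galois automorphism nu of the field Qn of #|G|-th roots of unity
   acts on Irr(G), and on the classes of G through a power map x |-> x ^+ k.
   By Brauer's permutation lemma both actions have the same number of fixed
   points; as the power map fixes every rational class, nu moves at most n
   characters.  The action of nu on characters is determined by its action
   on classes, which fixes the rational classes and maps the n irrational
   ones among themselves: at most n ^ n possibilities.  Since an irrational
   character is moved by some nu, there are at most n ^ n * n of them.
   Finally [Q(chi) : Q] is the length of the Galois orbit of chi, and every
   other member of that orbit is irrational. *)

Lemma leq_card_bigcup (I T : finType) (P : pred I) (A : I -> {set T}) :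
  (#|\bigcup_(i | P i) A i| <= \sum_(i | P i) #|A i|)%N.
Proof.
elim/big_rec2: _ => [|i m B _ IH]; first by rewrite cards0.
by apply: leq_trans (leq_card_setU _ _) _; rewrite leq_add2l.
Qed.

Lemma leq_card_bigcup_factor (I J T : finType) (D : {set I}) (g : I -> J)
    (M : I -> {set T}) m :
    {in D &, forall x y, g x = g y -> M x = M y} -> {in D, forall x, #|M x| <= m}%N ->
  (#|\bigcup_(x in D) M x| <= #|g @: D| * m)%N.
Proof.
move=> Mg leMm; pose M' y := oapp M set0 [pick x in D | g x == y].
have sub_M' : \bigcup_(x in D) M x \subset \bigcup_(y in g @: D) M' y.
  apply/bigcupsP => x Dx; apply: (bigcup_max (g x)); first exact: imset_f.
  rewrite /M'; case: pickP => [x' /andP[Dx' /eqP gx'x] | /(_ x)].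
    by rewrite /= (Mg x' x).
  by rewrite Dx eqxx.
apply: leq_trans (subset_leq_card sub_M') _; rewrite -sum_nat_const.
apply: leq_trans (leq_card_bigcup _ _) _; apply: leq_sum => y _; rewrite /M'.
by case: pickP => [x /andP[/leMm] | _] //=; rewrite cards0.
Qed.

Lemma card_stable_ffun_le (T : finType) (x0 : T) (A : {set T})
    (F : {set {ffun T -> T}}) :
    (forall f x, f \in F -> x \notin A -> f x = x) ->
    (forall f x, f \in F -> x \in A -> f x \in A) ->
  (#|F| <= #|A| ^ #|A|)%N.
Proof.
move=> fixF stabF.
pose res (f : {ffun T -> T}) := [ffun x => if x \in A then f x else x0].
have res_inj : {in F &, injective res}.
  move=> f1 f2 Ff1 Ff2 /ffunP eq_res; apply/ffunP => x.
  have := eq_res x; rewrite !ffunE.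
  by case: ifP => [_ // | /negbT Ax _]; rewrite !fixF.
rewrite -(card_in_imset res_inj) -(card_pffun_on x0); apply/subset_leq_card.
apply/subsetP => _ /imsetP[f Ff ->]; apply/pffun_onP; split.
  by apply/subsetP => x; rewrite inE ffunE; case: ifP; rewrite ?eqxx.
by move=> _ /imageP[x Ax ->]; rewrite ffunE Ax stabF.
Qed.

Lemma dependent_of_dim_lt (K : fieldType) (vT : vectType K) (U : {vspace vT})
    n (X : n.-tuple vT) :
    {subset X <= U} -> (\dim U < n)%N ->
  exists2 k : 'I_n -> K, \sum_(i < n) k i *: X`_i = 0 & exists i, k i != 0.
Proof.
move=> sXU ltUn; have : ~~ free X.
  apply: contraTN ltUn => /eqP freeX; rewrite -leqNgt -[n](size_tuple X) -freeX.
  by apply/dimvS/span_subvP.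
move=> /freeP notfree; apply: NNPP => no_rel; apply: notfree => k k0 i.
by apply: NNPP => nz_ki; apply: no_rel; exists k => //; exists i; apply/eqP.
Qed.

Section ClassPowerMaps.
Variables (gT : finGroupType) (G : {group gT}).

Definition class_rep (j : Iirr G) : gT := repr (irr_class j).

Lemma class_rep_in j : class_rep j \in G.
Proof. by have /repr_classesP[] := irr_classP j. Qed.

Lemma cfun_class_rep (phi : 'CF(G)) x :
  x \in G -> phi x = phi (class_rep (class_Iirr G (x ^: G)%g)).
Proof. by move=> Gx; rewrite /class_rep class_IirrK ?mem_classes // cfun_repr. Qed.

Lemma eq_cfun_class_rep (phi psi : 'CF(G)) :
  (forall j, phi (class_rep j) = psi (class_rep j)) -> phi = psi.
Proof. by move=> eq_phi; apply/cfun_inP => x Gx; rewrite !(cfun_class_rep _ Gx). Qed.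

Lemma class_rep_irr_inj j1 j2 :
  (forall i, 'chi[G]_i (class_rep j1) = 'chi_i (class_rep j2)) -> j1 = j2.
Proof.
move=> eq_chi; apply: (can_inj (@irr_classK _ G)).
have /class_eqP eq_cl : class_rep j1 \in (class_rep j2 ^: G)%g.
  by apply/eq_irr_mem_classP; [apply: class_rep_in | ].
by rewrite -[irr_class j1]repr_irr_classK -[irr_class j2]repr_irr_classK eq_cl.
Qed.

(* The restriction of chi_i to <[x]> is a sum of linear characters, whose *)
(* values are #|G|-th roots of unity, and u acts on these as w |-> w ^+ k.  *)
Lemma aut_irr_expg (u : {rmorphism algC -> algC}) :
  exists k : nat, forall i x, x \in G -> u ('chi[G]_i x) = 'chi_i (x ^+ k)%g.
Proof.
have [z prim_z] := C_prim_root_exists (cardG_gt0 G).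
have /(prim_rootP prim_z)[k Dk] : (u z) ^+ #|G| = 1.
  by rewrite -rmorphXn (prim_expr_order prim_z) rmorph1.
have u_root w : w ^+ #|G| = 1 -> u w = w ^+ k.
  by move=> /(prim_rootP prim_z)[m ->]; rewrite rmorphXn Dk -!exprM mulnC.
exists k => i x Gx.
have sxG : <[x]>%g \subset G by rewrite cycle_subG.
have xk : (x ^+ k)%g \in <[x]>%g by rewrite mem_cycle.
rewrite -(cfResE _ sxG (cycle_id x)) -(cfResE _ sxG xk).
have [r ->] := char_sum_irr (cfRes_char <[x]> (irr_char i)).
rewrite !sum_cfunE rmorph_sum; apply: eq_bigr => j _.
have lin_j := irr_cyclic_lin j (cycle_cyclic x).
rewrite (lin_charX lin_j _ (cycle_id x)) u_root //.
by rewrite -(lin_charX lin_j _ (cycle_id x)) (expg_cardG Gx) lin_char1.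
Qed.

Lemma brauer_permutation_lemma (s t : {perm Iirr G}) :
    (forall i j, 'chi_(s i) (class_rep j) = 'chi_i (class_rep (t j))) ->
  #|[set i | s i == i]| = #|[set j | t j == j]|.
Proof.
(* The invertible character table conjugates perm_mx s into perm_mx t^-1, *)
(* and the trace of a permutation matrix counts fixed points.             *)
move=> chi_st; have X_unit := character_table_unit G.
set X := character_table G in X_unit.
have sX_Xt : perm_mx s *m X = X *m perm_mx (t^-1)%g.
  rewrite -row_permE -col_permE; apply/matrixP => i j; rewrite !mxE.
  exact: chi_st.
have tr_perm (r : {perm Iirr G}) :
    \tr (perm_mx r : 'M[algC]_(Nirr G)) = #|[set i | r i == i]|%:R.
  rewrite -sumr_const big_mkcond; apply: eq_bigr => i _.
  by rewrite !mxE inE; case: ifP.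
have /eqP : #|[set i | s i == i]|%:R = #|[set j | (t^-1)%g j == j]|%:R :> algC.
  rewrite -!tr_perm -[perm_mx s](mulmxK X_unit) sX_Xt -mulmxA mxtrace_mulC.
  by rewrite mulmxKV.
rewrite eqr_nat => /eqP ->; apply: eq_card => j; rewrite !inE.
by rewrite -(inj_eq (@perm_inj _ t)) permKV eq_sym.
Qed.

Definition irrational_classes_idx :=
  [set j : Iirr G | irrational_class G (irr_class j)].

Lemma card_irrational_classes_idx :
  #|irrational_classes_idx| = num_irrational_classes G.
Proof.
rewrite /num_irrational_classes -(card_imset _ (can_inj (@irr_classK _ G))).
congr #|pred_of_set _|; apply/setP => K; rewrite inE.
apply/imsetP/andP => [[j] | [GK irrK]].
  by rewrite inE => irr_j ->; rewrite irr_classP.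
by exists (class_Iirr G K); rewrite ?inE class_IirrK.
Qed.

Lemma rational_class_rep j :
  j \notin irrational_classes_idx -> forall i, 'chi[G]_i (class_rep j) \in Crat.
Proof. by rewrite inE => /existsPn rat_j i; have := rat_j i; rewrite negbK. Qed.

Definition class_expg (k : nat) (j : Iirr G) : Iirr G :=
  class_Iirr G ((class_rep j ^+ k) ^: G)%g.

Section AutPowerMap.
Variables (u : {rmorphism algC -> algC}) (k : nat).
Hypothesis aut_chiE : forall i x, x \in G -> u ('chi[G]_i x) = 'chi_i (x ^+ k)%g.

Lemma chi_class_expg i j :
  'chi_i (class_rep j ^+ k)%g = 'chi[G]_i (class_rep (class_expg k j)).
Proof. exact/cfun_class_rep/groupX/class_rep_in. Qed.

Lemma aut_Iirr_class_rep i j :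
  'chi[G]_(aut_Iirr u i) (class_rep j) = 'chi_i (class_rep (class_expg k j)).
Proof. by rewrite aut_IirrE cfunE aut_chiE ?class_rep_in // chi_class_expg. Qed.

Lemma class_expg_inj : injective (class_expg k).
Proof.
move=> j1 j2 eq_j; apply: class_rep_irr_inj => i; apply: (fmorph_inj u).
by rewrite !aut_chiE ?class_rep_in // !chi_class_expg eq_j.
Qed.

Lemma class_expg_rational j : j \notin irrational_classes_idx -> class_expg k j = j.
Proof.
move=> /rational_class_rep rat_j; apply: class_rep_irr_inj => i.
by rewrite -chi_class_expg -aut_chiE ?class_rep_in // aut_Crat.
Qed.

Lemma class_expg_irrational j :
  j \in irrational_classes_idx -> class_expg k j \in irrational_classes_idx.
Proof.
apply: contraTT => rat_kj.
by have /class_expg_inj <- := class_expg_rational rat_kj.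
Qed.

Lemma card_moved_aut_Iirr :
  (#|[set i : Iirr G | aut_Iirr u i != i]| <= #|irrational_classes_idx|)%N.
Proof.
pose s := perm (@aut_Iirr_inj _ G u); pose t := perm class_expg_inj.
have card_moved (r : {perm Iirr G}) :
    #|[set i | r i != i]| = (#|Iirr G| - #|[set i | r i == i]|)%N.
  rewrite -(cardsC [set i | r i == i]) addKn.
  by apply: eq_card => i; rewrite !inE.
have -> : [set i : Iirr G | aut_Iirr u i != i] = [set i | s i != i].
  by apply/setP => i; rewrite !inE permE.
rewrite card_moved (@brauer_permutation_lemma s t) -?card_moved; last first.
  by move=> i j; rewrite !permE aut_Iirr_class_rep.
apply/subset_leq_card/subsetP => j; rewrite inE permE.
by apply: contraR => /class_expg_rational ->.
Qed.

End AutPowerMap.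

End ClassPowerMaps.

Lemma gal_fullv (F : fieldType) (L : splittingFieldType F) :
  'Gal({:L} / 1)%g = [set: gal_of {:L}].
Proof. by apply/setP => nu; rewrite in_setT gal_kAut ?sub1v // kAut1E subvf. Qed.

Section SubfieldImage.
Variables (F : fieldType) (L : fieldExtType F) (R : fieldType).
Variables (f : {rmorphism L -> R}) (g : R -> L) (E : {subfield L}).
Hypothesis fK : cancel f g.

Definition subfield_image : {pred R} := [pred y | (g y \in E) && (f (g y) == y)].

Lemma subfield_imageP y : reflect (exists2 b, b \in E & f b = y) (y \in subfield_image).
Proof.
apply: (iffP andP) => [[Egy /eqP fgy] | [b Eb <-]]; first by exists (g y).
by rewrite fK Eb.
Qed.

Lemma subfield_image_divring_closed : GRing.divring_closed subfield_image.
Proof.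
split; first by apply/subfield_imageP; exists 1; rewrite ?mem1v ?rmorph1.
  move=> _ _ /subfield_imageP[b Eb <-] /subfield_imageP[c Ec <-].
  by apply/subfield_imageP; exists (b - c); rewrite ?memvB ?rmorphB.
move=> _ _ /subfield_imageP[b Eb <-] /subfield_imageP[c Ec <-].
by apply/subfield_imageP; exists (b / c); rewrite ?memvM ?memvV ?fmorph_div.
Qed.

End SubfieldImage.

Lemma Qdegree_le_dim (gT : finGroupType) (G : {group gT}) (chi : 'CF(G))
    (Qn : fieldExtType rat) (QnC : {rmorphism Qn -> algC}) (E : {subfield Qn}) k :
    (forall x, exists2 b, b \in E & QnC b = chi x) -> (\dim E <= k)%N ->
  Qdegree_le chi k.
Proof.
move=> chiE leEk s size_s Qchi_s; have [CtoQn _ QnCK] := num_field_proj QnC.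
have s_im (j : 'I_k.+1) : s`_j \in subfield_image QnC CtoQn E.
  have s_j : s`_j \in s by rewrite mem_nth ?size_s.
  apply: (Qchi_s _ s_j _ (subfield_image_divring_closed E QnCK)) => x.
  by have [b Eb <-] := chiE x; apply/(subfield_imageP _ QnCK); exists b.
pose X := [tuple CtoQn s`_j | j < k.+1].
have sXE : {subset X <= E}.
  by move=> _ /mapP[j _ ->]; have /andP[] := s_im j.
have [c Xc0 [j0 nz_c]] := dependent_of_dim_lt sXE leEk.
exists (mkseq (fun j => c (inord j)) k.+1); split.
- by rewrite size_mkseq.
- by apply/(has_nthP 0); exists j0; rewrite ?size_mkseq // nth_mkseq // inord_val.
transitivity (QnC (\sum_(j < k.+1) c j *: X`_j)); last by rewrite Xc0 rmorph0.
rewrite rmorph_sum; apply: eq_bigr => j _.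
have /andP[_ /eqP QnC_sj] := s_im j.
by rewrite rmorphZ_num nth_mkseq // inord_val nth_mktuple QnC_sj.
Qed.

Section GaloisActionOnIrr.
Variables (gT : finGroupType) (G : {group gT}) (Qn : splittingFieldType rat).
Variables (QnC : {rmorphism Qn -> algC}).
Variable galC : gal_of {:Qn} -> {rmorphism algC -> algC}.
Hypothesis galQn : galois 1 {:Qn}.
Hypothesis galCE : forall nu : gal_of {:Qn}, {morph QnC : a / nu a >-> galC nu a}.
Hypothesis irr_Qn : forall i x, exists a, QnC a = 'chi[G]_i x.

Let CtoQn := s2val (num_field_proj QnC).
Let QnCK : cancel QnC CtoQn := s2valP' (num_field_proj QnC).

Let irr_QnK i x : QnC (CtoQn ('chi[G]_i x)) = 'chi_i x.
Proof. by have [a <-] := irr_Qn i x; rewrite QnCK. Qed.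

Let galC_irr nu i x : galC nu ('chi[G]_i x) = QnC (nu (CtoQn ('chi_i x))).
Proof. by rewrite galCE irr_QnK. Qed.

Definition gal_Iirr (i : Iirr G) (nu : gal_of {:Qn}) := aut_Iirr (galC nu) i.

Lemma gal_IirrE i nu x : 'chi_(gal_Iirr i nu) x = galC nu ('chi_i x).
Proof. by rewrite aut_IirrE cfunE. Qed.

Lemma gal_Iirr1 : gal_Iirr^~ 1%g =1 id.
Proof.
move=> i; apply/irr_inj/cfunP => x.
by rewrite gal_IirrE galC_irr gal_id irr_QnK.
Qed.

Lemma gal_IirrM i : act_morph gal_Iirr i.
Proof.
move=> mu nu; apply/irr_inj/cfunP => x.
by rewrite !gal_IirrE galC_irr galM ?memvf // galCE -galC_irr.
Qed.

Definition gal_act := TotalAction gal_Iirr1 gal_IirrM.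

Lemma irrational_char_moved i :
  irrational_char 'chi[G]_i -> exists nu, gal_Iirr i nu != i.
Proof.
case/exists_inP=> x Gx irr_x; apply/existsP; apply: contraR irr_x.
rewrite negb_exists => /forallP fix_i; rewrite -irr_QnK.
have : CtoQn ('chi_i x) \in fixedField 'Gal({:Qn} / 1)%g.
  apply/fixedFieldP => [|nu _]; first exact: memvf.
  apply: (fmorph_inj QnC); rewrite -galC_irr -gal_IirrE.
  by have /negPn/eqP-> := fix_i nu.
rewrite (galois_fixedField galQn) => /vlineP[r ->].
by rewrite rmorphZ_num rmorph1 mulr1 Crat_rat.
Qed.

Lemma orbit_gal_Iirr_irrational i j :
  j \in orbit gal_act setT i -> j != i -> irrational_char 'chi[G]_j.
Proof.
case/orbitP=> nu _ <-; apply: contraNT => /exists_inPn rat_chi.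
apply/eqP/irr_inj/cfun_inP => x Gx; have := negbNE (rat_chi x Gx).
by rewrite /= gal_IirrE Crat_aut => /aut_Crat->.
Qed.

(* The copy of Q(chi_i) inside Qn. *)
Definition irr_field i : {subfield Qn} := [aspace of fixedField 'C[i | gal_act]%g].

Lemma irr_field_values i x : CtoQn ('chi[G]_i x) \in irr_field i.
Proof.
apply/fixedFieldP => [|nu /astab1P fix_i]; first exact: memvf.
apply: (fmorph_inj QnC).
by rewrite -galC_irr -gal_IirrE [gal_Iirr _ _]fix_i irr_QnK.
Qed.

Lemma dim_irr_field i : \dim (irr_field i) = #|orbit gal_act setT i|.
Proof.
have sCGal : 'C[i | gal_act]%g \subset 'Gal({:Qn} / 1)%g by rewrite gal_fullv subsetT.
have := dim_fixed_galois galQn sCGal; rewrite dimv1 divn1 => ->.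
by rewrite card_orbit gal_fullv setTI.
Qed.

Lemma irr_Qdegree_le i k :
  (num_irrational_chars G < k)%N -> Qdegree_le 'chi[G]_i k.
Proof.
move=> lt_irr_k; apply: (Qdegree_le_dim (E := irr_field i)) => [x | ].
  by exists (CtoQn ('chi_i x)); rewrite ?irr_field_values ?irr_QnK.
have orbit_sub :
    orbit gal_act setT i \subset i |: [set j | irrational_char 'chi[G]_j].
  apply/subsetP=> j orb_j; rewrite !inE; have [// | neq_ji] := eqVneq j i.
  exact: orbit_gal_Iirr_irrational orb_j neq_ji.
rewrite dim_irr_field (leq_trans (subset_leq_card orbit_sub)) // cardsU1.
exact: leq_trans (leq_add (leq_b1 _) (leqnn _)) lt_irr_k.
Qed.

Lemma num_irrational_chars_le (m := num_irrational_classes G) :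
  (num_irrational_chars G <= m ^ m * m)%N.
Proof.
rewrite /m -card_irrational_classes_idx.
have [k aut_chiE] : exists k : gal_of {:Qn} -> nat,
    forall nu i x, x \in G -> galC nu ('chi[G]_i x) = 'chi_i (x ^+ k nu)%g.
  exact: fin_all_exists (fun nu => aut_irr_expg G (galC nu)).
pose cls nu : {ffun Iirr G -> Iirr G} := [ffun j => class_expg (k nu) j].
pose moved nu := [set i | gal_Iirr i nu != i].
have irr_moved :
    [set i | irrational_char 'chi[G]_i] \subset \bigcup_(nu in setT) moved nu.
  apply/subsetP => i; rewrite inE => /irrational_char_moved[nu moved_i].
  by apply/bigcupP; exists nu; rewrite ?inE.
apply: leq_trans (subset_leq_card irr_moved) _.
apply: leq_trans (leq_card_bigcup_factor (g := cls) _ _) _.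
- move=> nu mu _ _ eq_cls; apply/setP => i; rewrite !inE.
  suff -> : gal_Iirr i nu = gal_Iirr i mu by [].
  apply/irr_inj/eq_cfun_class_rep => j.
  have := congr1 (fun f : {ffun _ -> _} => f j) eq_cls; rewrite !ffunE => eq_kj.
  by rewrite !(aut_Iirr_class_rep (aut_chiE _)) eq_kj.
- by move=> nu _; apply: card_moved_aut_Iirr (aut_chiE nu).
rewrite leq_mul2r; apply/orP; right.
apply: (card_stable_ffun_le 0) => _ j /imsetP[nu _ ->]; rewrite ffunE.
  exact: class_expg_rational (aut_chiE nu) j.
exact: class_expg_irrational (aut_chiE nu) j.
Qed.

End GaloisActionOnIrr.

Lemma irrational_chars_bound (gT : finGroupType) (G : {group gT})
    (m := num_irrational_classes G) :
  (num_irrational_chars G <= m ^ m * m)%N /\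
  forall i, Qdegree_le 'chi[G]_i (m ^ m * m).+1.
Proof.
have [Qn galQn [QnC gQnC [_ _ QnG]]] := group_num_field_exists G.
have irr_Qn i x : exists a, QnC a = 'chi[G]_i x.
  have [Gx | notGx] := boolP (x \in G); last by exists 0; rewrite rmorph0 cfun0.
  by have [a <-] := QnG _ G _ (irr_char i) x (order_dvdG Gx); exists a.
pose galC (nu : gal_of {:Qn}) := sval (gQnC nu).
have galCE (nu : gal_of {:Qn}) : {morph QnC : a / nu a >-> galC nu a}.
  exact: svalP (gQnC nu).
have le_irr_m := num_irrational_chars_le galQn galCE irr_Qn.
by split=> // i; apply: (irr_Qdegree_le galQn galCE irr_Qn); rewrite ltnS.
Qed.

Theorem theoremC (n : nat) (hn : (0 < n)%N) :
  exists f : nat,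
    forall (gT : finGroupType) (G : {group gT}),
      num_irrational_classes G = n ->
      (num_irrational_chars G <= f)%N /\
      (forall i : Iirr G, Qdegree_le 'chi[G]_i f).
Proof.
exists (n ^ n * n).+1 => gT G <-.
by have [le_irr Qdeg] := irrational_chars_bound G; split; first exact: leqW.
Qed.
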